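(* Let $\Sigma$ be a signature, $T$ a monad on sets carrying a continuous $\Sigma$-algebra structure, and $\Gamma$ a relator for the monad $T$ that is inductive and respects $\Sigma$. Then the cocontextual preorder $\geq_\Gamma$ (the converse of $\leq_\Gamma$) is the largest $\lambda$-term relation that is both $\Gamma^c$-preadequate and compatible.
   Context: An $\omega$CPPO is a poset with least element $\bot$ in which every $\omega$-chain has a lub; continuous = monotone and preserving such lubs. $T$ (unit $\eta$, bind $u\texttt{>>=}f$) carries a continuous $\Sigma$-algebra structure if each $TX$ is an $\omega$CPPO, bind is continuous in both arguments, and each $\sigma\in\Sigma$ of arity $k$ is interpreted by a continuous $\sigma^T:(TX)^k\to TX$. A relator $\Gamma$ for $T$ assigns to each $R\subseteq X\times Y$ a relation $\Gamma R\subseteq TX\times TY$ with: $=_{TX}\subseteq\Gamma(=_X)$; $\Gamma S\circ\Gamma R\subseteq\Gamma(S\circ R)$; $\Gamma((f\times g)^{-1}R)=(Tf\times Tg)^{-1}\Gamma R$ with $(f\times g)^{-1}R=\{(z,w)\mid f(z)\,R\,g(w)\}$; monotone in $R$; $x\,R\,y\Rightarrow\eta(x)\,\Gamma R\,\eta(y)$; if $x\,R\,y\Rightarrow f(x)\,\Gamma S\,g(y)$ for all $x,y$ then $u\,\Gamma R\,v\Rightarrow(u\texttt{>>=}f)\,\Gamma S\,(v\texttt{>>=}g)$. Inductive: $\bot\,\Gamma R\,v$ always, and $(\forall n.\ u_n\,\Gamma R\,v)\Rightarrow\bigsqcup_n u_n\,\Gamma R\,v$ for $\omega$-chains. Respects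 $\Sigma$: $u_i\,\Gamma R\,v_i$ for all $i$ implies $\sigma^T(\vec u)\,\Gamma R\,\sigma^T(\vec v)$. The converse relator is $\Gamma^c(R)=(\Gamma(R^c))^c$, with $R^c$ the converse relation. Terms/values: $M,N::=\mathsf{return}\,V\mid VW\mid(M\ \mathsf{to}\ x.N)\mid\sigma(M_1,\dots,M_{\alpha(\sigma)})$, $V,W::=x\mid\lambda x.M$; $\mathcal{T}_0,\mathcal{V}_0$ closed terms/values; $\mathcal{T}(\bar x),\mathcal{V}(\bar x)$ those with free variables in $\bar x$. $[\![M]\!]=\bigsqcup_nM^{(n)}$ where $M^{(0)}=\bot$, $(\mathsf{return}\,V)^{(n+1)}=\eta(V)$, $((\lambda x.M)V)^{(n+1)}=(M[V/x])^{(n)}$, $(M\ \mathsf{to}\ x.N)^{(n+1)}=M^{(n)}\texttt{>>=}(V\mapsto(N[V/x])^{(n)})$, $(\sigma(\vec M))^{(n+1)}=\sigma^T(M_1^{(n)},\dots)$. A $\lambda$-term relation is a pair $R=(R_{\mathcal{T}},R_{\mathcal{V}})$ of sets of triples $(\bar x,M,N)$ with $M,N\in\mathcal{T}(\bar x)$, resp. $(\bar x,V,W)$ with $V,W\in\mathcal{V}(\bar x)$, written $\bar x\vdash M\,R\,N$; its converse reverses the last two components. It is compatible if: $\bar x\vdash x\,R_{\mathcal{V}}\,x$ for $x\in\bar x$; $\bar x\cup\{x\}\vdash M\,R_{\mathcal{T}}\,N$ ($x\notin\bar x$) implies $\bar x\vdash\lambda x.M\,R_{\mathcal{V}}\,\lambda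 x.N$; $\bar x\vdash V\,R_{\mathcal{V}}\,W$ implies $\bar x\vdash\mathsf{return}\,V\,R_{\mathcal{T}}\,\mathsf{return}\,W$; $\bar x\vdash V\,R_{\mathcal{V}}\,V'$, $\bar x\vdash W\,R_{\mathcal{V}}\,W'$ imply $\bar x\vdash VW\,R_{\mathcal{T}}\,V'W'$; $\bar x\vdash M\,R_{\mathcal{T}}\,M'$, $\bar x\cup\{x\}\vdash N\,R_{\mathcal{T}}\,N'$ ($x\notin\bar x$) imply $\bar x\vdash(M\ \mathsf{to}\ x.N)\,R_{\mathcal{T}}\,(M'\ \mathsf{to}\ x.N')$; $\bar x\vdash M_i\,R_{\mathcal{T}}\,N_i$ for all $i$ implies $\bar x\vdash\sigma(\vec M)\,R_{\mathcal{T}}\,\sigma(\vec N)$. Let $\mathcal{U}=\mathcal{V}_0\times\mathcal{V}_0$; for a relator $\Delta$, $R$ is $\Delta$-preadequate if for closed $M,N$, $\emptyset\vdash M\,R_{\mathcal{T}}\,N$ implies $[\![M]\!]\,\Delta\mathcal{U}\,[\![N]\!]$. $\leq_\Gamma$ is the union of all compatible $\Gamma$-preadequate $\lambda$-term relations, and $\geq_\Gamma$ is its converse. *)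

Record signature := Signature {
  op : Type;
  arity : op -> nat
}.

(* Finite sets {0,..,n-1}: fin 0 = empty, fin (S n) = option (fin n);
   None is the most recently bound variable (de Bruijn index 0). *)
Fixpoint fin (n : nat) : Type :=
  match n with
  | 0 => Empty_set
  | S n => option (fin n)
  end.

(* Terms and values (well-scoped de Bruijn: tm n = terms with free      *)
(* variables among n variables; tm 0 = closed terms)                   *)
Inductive vl (Sg : signature) (n : nat) : Type :=
| Var : fin n -> vl Sg n
| Lam : tm Sg (S n) -> vl Sg n
with tm (Sg : signature) (n : nat) : Type :=
| Ret : vl Sg n -> tm Sg n
| App : vl Sg n -> vl Sg n -> tm Sg n
| Bind : tm Sg n -> tm Sg (S n) -> tm Sg n       (* M to x. N *)
| Op : forall s : op Sg, (fin (@arity Sg s) -> tm Sg n) -> tm Sg n.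

Arguments Var {Sg n} _.
Arguments Lam {Sg n} _.
Arguments Ret {Sg n} _.
Arguments App {Sg n} _ _.
Arguments Bind {Sg n} _ _.
Arguments Op {Sg n} _ _.

Definition up_ren {m n : nat} (r : fin m -> fin n) : fin (S m) -> fin (S n) :=
  fun i => match i with None => None | Some j => Some (r j) end.

Fixpoint ren_vl {Sg : signature} {m n : nat} (r : fin m -> fin n) (v : vl Sg m)
  {struct v} : vl Sg n :=
  match v with
  | Var i => Var (r i)
  | Lam M => Lam (ren_tm (up_ren r) M)
  end
with ren_tm {Sg : signature} {m n : nat} (r : fin m -> fin n) (M : tm Sg m)
  {struct M} : tm Sg n :=
  match M with
  | Ret V => Ret (ren_vl r V)
  | App V W => App (ren_vl r V) (ren_vl r W)
  | Bind M N => Bind (ren_tm r M) (ren_tm (up_ren r) N)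
  | Op s args => Op s (fun i => ren_tm r (args i))
  end.

Definition shift {n : nat} : fin n -> fin (S n) := fun i => Some i.

Definition up_sub {Sg : signature} {m n : nat} (s : fin m -> vl Sg n)
  : fin (S m) -> vl Sg (S n) :=
  fun i => match i with
           | None => Var (None : fin (S n))
           | Some j => ren_vl shift (s j)
           end.

Fixpoint subst_vl {Sg : signature} {m n : nat} (s : fin m -> vl Sg n) (v : vl Sg m)
  {struct v} : vl Sg n :=
  match v with
  | Var i => s i
  | Lam M => Lam (subst_tm (up_sub s) M)
  end
with subst_tm {Sg : signature} {m n : nat} (s : fin m -> vl Sg n) (M : tm Sg m)
  {struct M} : tm Sg n :=
  match M with
  | Ret V => Ret (subst_vl s V)
  | App V W => App (subst_vl s V) (subst_vl s W)
  | Bind M N => Bind (subst_tm s M) (subst_tm (up_sub s) N)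
  | Op o args => Op o (fun i => subst_tm s (args i))
  end.

Definition subst1 {Sg : signature} (M : tm Sg 1) (V : vl Sg 0) : tm Sg 0 :=
  subst_tm (fun i : fin 1 => match i with None => V | Some e => match e with end end) M.

Record monad := Monad {
  T : Type -> Type;
  ret : forall X : Type, X -> T X;
  bind : forall X Y : Type, T X -> (X -> T Y) -> T Y;
  bind_ret_l : forall (X Y : Type) (x : X) (f : X -> T Y), bind X Y (ret X x) f = f x;
  bind_ret_r : forall (X : Type) (u : T X), bind X X u (ret X) = u;
  bind_assoc : forall (X Y Z : Type) (u : T X) (f : X -> T Y) (g : Y -> T Z),
      bind Y Z (bind X Y u f) g = bind X Z u (fun x => bind Y Z (f x) g)
}.
Arguments ret {m X} _.
Arguments bind {m X Y} _ _.

Definition fmap (Mo : monad) {X Y : Type} (f : X -> Y) (u : T Mo X) : T Mo Y :=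
  bind u (fun x => ret (f x)).

Definition is_chain {A : Type} (le : A -> A -> Prop) (c : nat -> A) : Prop :=
  forall k, le (c k) (c (S k)).

Record wcppo (A : Type) := WCPPO {
  le : A -> A -> Prop;
  bot : A;
  sup : (nat -> A) -> A;
  le_refl : forall x, le x x;
  le_trans : forall x y z, le x y -> le y z -> le x z;
  le_antisym : forall x y, le x y -> le y x -> x = y;
  bot_least : forall x, le bot x;
  sup_ub : forall c, is_chain le c -> forall k, le (c k) (sup c);
  sup_least : forall c, is_chain le c -> forall x, (forall k, le (c k) x) -> le (sup c) x
}.
Arguments le {A} _ _ _.
Arguments bot {A} _.
Arguments sup {A} _ _.

Record cont_sig_alg (Sg : signature) (Mo : monad) := ContSigAlg {
  cpo : forall X : Type, wcppo (T Mo X);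
  sigT : forall (X : Type) (s : op Sg), (fin (@arity Sg s) -> T Mo X) -> T Mo X;
  bind_mono_l : forall (X Y : Type) (f : X -> T Mo Y) (u v : T Mo X),
      le (cpo X) u v -> le (cpo Y) (bind u f) (bind v f);
  bind_sup_l : forall (X Y : Type) (f : X -> T Mo Y) (c : nat -> T Mo X),
      is_chain (le (cpo X)) c ->
      bind (sup (cpo X) c) f = sup (cpo Y) (fun k => bind (c k) f);
  bind_mono_r : forall (X Y : Type) (u : T Mo X) (f g : X -> T Mo Y),
      (forall x, le (cpo Y) (f x) (g x)) -> le (cpo Y) (bind u f) (bind u g);
  bind_sup_r : forall (X Y : Type) (u : T Mo X) (c : nat -> X -> T Mo Y),
      (forall x, is_chain (le (cpo Y)) (fun k => c k x)) ->
      bind u (fun x => sup (cpo Y) (fun k => c k x)) = sup (cpo Y) (fun k => bind u (c k));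
  sig_mono : forall (X : Type) (s : op Sg) (us vs : fin (@arity Sg s) -> T Mo X),
      (forall i, le (cpo X) (us i) (vs i)) -> le (cpo X) (sigT X s us) (sigT X s vs);
  sig_sup : forall (X : Type) (s : op Sg) (c : nat -> fin (@arity Sg s) -> T Mo X),
      (forall i, is_chain (le (cpo X)) (fun k => c k i)) ->
      sigT X s (fun i => sup (cpo X) (fun k => c k i)) = sup (cpo X) (fun k => sigT X s (c k))
}.
Arguments cpo {Sg Mo} _ _.
Arguments sigT {Sg Mo} _ {X} _ _.

Definition rel_lifting (Mo : monad) :=
  forall X Y : Type, (X -> Y -> Prop) -> T Mo X -> T Mo Y -> Prop.

Definition rel_comp {X Y Z : Type} (R : X -> Y -> Prop) (S : Y -> Z -> Prop) : X -> Z -> Prop :=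
  fun x z => exists y, R x y /\ S y z.   (* S o R *)

Definition rel_conv {X Y : Type} (R : X -> Y -> Prop) : Y -> X -> Prop := fun y x => R x y.

Definition is_relator (Mo : monad) (G : rel_lifting Mo) : Prop :=
  (forall (X : Type) (u : T Mo X), G X X (@eq X) u u)
  /\ (forall (X Y Z : Type) (R : X -> Y -> Prop) (S : Y -> Z -> Prop) u v w,
        G X Y R u v -> G Y Z S v w -> G X Z (rel_comp R S) u w)
  /\ (forall (X Y Z W : Type) (f : Z -> X) (g : W -> Y) (R : X -> Y -> Prop) u v,
        G Z W (fun z w => R (f z) (g w)) u v <-> G X Y R (fmap Mo f u) (fmap Mo g v))
  /\ (forall (X Y : Type) (R S : X -> Y -> Prop),
        (forall x y, R x y -> S x y) -> forall u v, G X Y R u v -> G X Y S u v)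
  /\ (forall (X Y : Type) (R : X -> Y -> Prop) x y, R x y -> G X Y R (ret x) (ret y))
  /\ (forall (X Y X' Y' : Type) (R : X -> Y -> Prop) (S : X' -> Y' -> Prop)
             (f : X -> T Mo X') (g : Y -> T Mo Y'),
        (forall x y, R x y -> G X' Y' S (f x) (g y)) ->
        forall u v, G X Y R u v -> G X' Y' S (bind u f) (bind v g)).

Definition conv_relator (Mo : monad) (G : rel_lifting Mo) : rel_lifting Mo :=
  fun X Y R u v => G Y X (rel_conv R) v u.

Definition inductive_relator (Sg : signature) (Mo : monad) (A : cont_sig_alg Sg Mo)
  (G : rel_lifting Mo) : Prop :=
  (forall (X Y : Type) (R : X -> Y -> Prop) (v : T Mo Y), G X Y R (bot (cpo A X)) v)
  /\ (forall (X Y : Type) (R : X -> Y -> Prop) (c : nat -> T Mo X) (v : T Mo Y),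
        is_chain (le (cpo A X)) c -> (forall k, G X Y R (c k) v) ->
        G X Y R (sup (cpo A X) c) v).

Definition respects_sig (Sg : signature) (Mo : monad) (A : cont_sig_alg Sg Mo)
  (G : rel_lifting Mo) : Prop :=
  forall (X Y : Type) (R : X -> Y -> Prop) (s : op Sg)
         (us : fin (@arity Sg s) -> T Mo X) (vs : fin (@arity Sg s) -> T Mo Y),
    (forall i, G X Y R (us i) (vs i)) -> G X Y R (sigT A s us) (sigT A s vs).

Fixpoint approx {Sg : signature} {Mo : monad} (A : cont_sig_alg Sg Mo)
  (k : nat) (M : tm Sg 0) {struct k} : T Mo (vl Sg 0) :=
  match k with
  | 0 => bot (cpo A (vl Sg 0))
  | S k =>
    match M with
    | Ret V => ret V
    | App V W =>
        match V with
        | Lam M' => approx A k (subst1 M' W)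
        | Var i => match i : Empty_set with end
        end
    | Bind M N => bind (approx A k M) (fun V => approx A k (subst1 N V))
    | Op s args => sigT A s (fun i => approx A k (args i))
    end
  end.

Definition den {Sg : signature} {Mo : monad} (A : cont_sig_alg Sg Mo) (M : tm Sg 0)
  : T Mo (vl Sg 0) :=
  sup (cpo A (vl Sg 0)) (fun k => approx A k M).

Record lrel (Sg : signature) := LRel {
  relT : forall n, tm Sg n -> tm Sg n -> Prop;
  relV : forall n, vl Sg n -> vl Sg n -> Prop
}.
Arguments relT {Sg} _ {n} _ _.
Arguments relV {Sg} _ {n} _ _.

Definition lrel_conv {Sg : signature} (R : lrel Sg) : lrel Sg :=
  LRel Sg (fun n M N => relT R N M) (fun n V W => relV R W V).

Definition lrel_sub {Sg : signature} (R S : lrel Sg) : Prop :=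
  (forall n (M N : tm Sg n), relT R M N -> relT S M N)
  /\ (forall n (V W : vl Sg n), relV R V W -> relV S V W).

Definition compatible {Sg : signature} (R : lrel Sg) : Prop :=
  (forall n (i : fin n), relV R (Var i) (Var i))
  /\ (forall n (M N : tm Sg (S n)), relT R M N -> relV R (Lam M) (Lam N))
  /\ (forall n (V W : vl Sg n), relV R V W -> relT R (Ret V) (Ret W))
  /\ (forall n (V V' W W' : vl Sg n), relV R V V' -> relV R W W' ->
        relT R (App V W) (App V' W'))
  /\ (forall n (M M' : tm Sg n) (N N' : tm Sg (S n)), relT R M M' -> relT R N N' ->
        relT R (Bind M N) (Bind M' N'))
  /\ (forall n (s : op Sg) (Ms Ns : fin (@arity Sg s) -> tm Sg n),
        (forall i, relT R (Ms i) (Ns i)) -> relT R (Op s Ms) (Op s Ns)).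

Definition Urel {Sg : signature} : vl Sg 0 -> vl Sg 0 -> Prop := fun _ _ => True.

Definition preadequate {Sg : signature} {Mo : monad} (A : cont_sig_alg Sg Mo)
  (D : rel_lifting Mo) (R : lrel Sg) : Prop :=
  forall M N : tm Sg 0, relT R M N -> D (vl Sg 0) (vl Sg 0) Urel (den A M) (den A N).

Definition leqG {Sg : signature} {Mo : monad} (A : cont_sig_alg Sg Mo)
  (G : rel_lifting Mo) : lrel Sg :=
  LRel Sg (fun n M N => exists R : lrel Sg, compatible R /\ preadequate A G R /\ relT R M N)
       (fun n V W => exists R : lrel Sg, compatible R /\ preadequate A G R /\ relV R V W).

Definition geqG {Sg : signature} {Mo : monad} (A : cont_sig_alg Sg Mo)
  (G : rel_lifting Mo) : lrel Sg :=
  lrel_conv (leqG A G).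

From Stdlib Require Import Relations FunctionalExtensionality.

(* A union of compatible relations need not be compatible, but its reflexive-transitive
   closure is: every compatible relation is reflexive, so two terms whose immediate
   subterms are related can be connected by changing one subterm at a time, each change
   being justified by a single compatible relation.  The closure stays [G]-preadequate
   because [G U] is a preorder on [T V0].  Hence the closure is contained in [<=_G],
   which is therefore compatible, and so it is the largest compatible [G]-preadequate
   relation.  Converses preserve compatibility, and [R] is [G^c]-preadequate iff [R^c]
   is [G]-preadequate, which transfers everything to [>=_G]. *)

Lemma fin_eq_dec (k : nat) (i j : fin k) : {i = j} + {i <> j}.
Proof. induction k as [|k IH]; [destruct i | decide equality]. Qed.

Lemma clos_refl_trans_map {X Y : Type} (R : relation X) (S : relation Y) (f : X -> Y) :
  (forall a b, R a b -> clos_refl_trans Y S (f a) (f b)) ->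
  forall a b, clos_refl_trans X R a b -> clos_refl_trans Y S (f a) (f b).
Proof.
  intros Hf a b Hab. induction Hab as [a b Hab| |a b c _ IHab _ IHbc].
  - now apply Hf.
  - apply rt_refl.
  - now apply rt_trans with (f b).
Qed.

Definition one_coordinate_step {X : Type} (R : relation X) (k : nat) : relation (fin k -> X) :=
  fun f g => exists i, R (f i) (g i) /\ forall j, j <> i -> f j = g j.

Lemma clos_refl_trans_pointwise {X : Type} (R : relation X) (k : nat) (f g : fin k -> X) :
  (forall i, clos_refl_trans X R (f i) (g i)) ->
  clos_refl_trans _ (one_coordinate_step R k) f g.
Proof.
  revert f g. induction k as [|k IH]; intros f g Hfg.
  - replace g with f; [apply rt_refl|]. apply functional_extensionality. intros [].
  - pose (vcons := fun a (h : fin k -> X) (o : fin (S k)) =>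
      match o with None => a | Some j => h j end).
    assert (Hcons : forall h : fin (S k) -> X, h = vcons (h None) (fun j => h (Some j))).
    { intros h. apply functional_extensionality. now intros [j|]. }
    rewrite (Hcons f), (Hcons g).
    apply rt_trans with (vcons (g None) (fun j => f (Some j))).
    + apply (clos_refl_trans_map R _ (fun a => vcons a (fun j => f (Some j)))); [|apply Hfg].
      intros a b Hab. apply rt_step. exists None.
      split; [exact Hab|]. now intros [j|] Hj.
    + apply (clos_refl_trans_map (one_coordinate_step R k) _ (vcons (g None)));
        [|apply IH; intros i; apply Hfg].
      intros h h' [i [Hi Heq]]. apply rt_step. exists (Some i). split; [exact Hi|].
      intros [j|] Hj; [|reflexivity]. apply Heq. congruence.
Qed.

Scheme tm_mind := Induction for tm Sort Prop
  with vl_mind := Induction for vl Sort Prop.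

Section LambdaTermRelations.
Variable Sg : signature.

Lemma compatible_refl (R : lrel Sg) : compatible R ->
  (forall n (M : tm Sg n), relT R M M) /\ (forall n (V : vl Sg n), relV R V V).
Proof.
  intros [Hvar [Hlam [Hret [Happ [Hbind Hop]]]]]. split.
  - apply (tm_mind Sg (fun n M => relT R M M) (fun n V => relV R V V)); auto.
  - apply (vl_mind Sg (fun n M => relT R M M) (fun n V => relV R V V)); auto.
Qed.

Lemma compatible_conv (R : lrel Sg) : compatible R -> compatible (lrel_conv R).
Proof.
  intros [Hvar [Hlam [Hret [Happ [Hbind Hop]]]]].
  repeat split; cbn; auto.
Qed.

Lemma compatible_equiv (R S : lrel Sg) :
  lrel_sub R S -> lrel_sub S R -> compatible R -> compatible S.
Proof.
  intros [HRST HRSV] [HSRT HSRV] [Hvar [Hlam [Hret [Happ [Hbind Hop]]]]].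
  repeat split; intros; auto.
Qed.

Lemma lrel_sub_conv_r (R S : lrel Sg) : lrel_sub (lrel_conv R) S -> lrel_sub R (lrel_conv S).
Proof. intros [HT HV]. split; intros n a b Hab; [apply HT | apply HV]; exact Hab. Qed.

Definition lrel_rtclos (R : lrel Sg) : lrel Sg :=
  LRel Sg (fun n => clos_refl_trans _ (@relT Sg R n))
          (fun n => clos_refl_trans _ (@relV Sg R n)).

Section CompatibleUnion.
Variable P : lrel Sg -> Prop.

Definition union_on {X : Type} (r : lrel Sg -> relation X) : relation X :=
  fun a b => exists R, compatible R /\ P R /\ r R a b.

Definition compatible_union : lrel Sg :=
  LRel Sg (fun n => union_on (fun R => @relT Sg R n))
          (fun n => union_on (fun R => @relV Sg R n)).

Lemma compatible_union_greatest (R : lrel Sg) :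
  compatible R -> P R -> lrel_sub R compatible_union.
Proof. intros HR HP. split; intros n a b Hab; now exists R. Qed.

Lemma union_on_congr {X Y : Type} (rX : lrel Sg -> relation X) (rY : lrel Sg -> relation Y)
  (f : X -> Y) :
  (forall R, compatible R -> forall a b, rX R a b -> rY R (f a) (f b)) ->
  forall a b, clos_refl_trans X (union_on rX) a b ->
  clos_refl_trans Y (union_on rY) (f a) (f b).
Proof.
  intros Hf. apply clos_refl_trans_map.
  intros a b [R [HR [HP Hab]]]. apply rt_step. exists R. auto.
Qed.

Lemma compatible_rtclos_union : compatible (lrel_rtclos compatible_union).
Proof.
  repeat split; cbn.
  - intros n i. apply rt_refl.
  - intros n M N. apply union_on_congr. intros R HR. apply HR.
  - intros n V W. apply union_on_congr. intros R HR. apply HR.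
  - intros n V V' W W' HV HW. apply rt_trans with (App V' W).
    + eapply (union_on_congr _ _ (fun v => App v W)); [|exact HV].
      intros R HR a b Hab. apply HR; [exact Hab|apply compatible_refl, HR].
    + eapply (union_on_congr _ _ (App V')); [|exact HW].
      intros R HR a b Hab. apply HR; [apply compatible_refl, HR|exact Hab].
  - intros n M M' N N' HM HN. apply rt_trans with (Bind M' N).
    + eapply (union_on_congr _ _ (fun m => Bind m N)); [|exact HM].
      intros R HR a b Hab. apply HR; [exact Hab|apply compatible_refl, HR].
    + eapply (union_on_congr _ _ (Bind M')); [|exact HN].
      intros R HR a b Hab. apply HR; [apply compatible_refl, HR|exact Hab].
  - intros n s Ms Ns HMN.
    eapply (clos_refl_trans_map (one_coordinate_step _ _) _ (Op s));
      [|now apply clos_refl_trans_pointwise].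
    intros f g [i [[R [HR [HP Hi]]] Heq]]. apply rt_step. exists R.
    split; [exact HR|split; [exact HP|]]. apply HR. intros j.
    destruct (fin_eq_dec _ j i) as [->|Hji]; [exact Hi|].
    rewrite (Heq j Hji). apply compatible_refl, HR.
Qed.

Lemma compatible_union_compatible :
  P (lrel_rtclos compatible_union) -> compatible compatible_union.
Proof.
  intros HP. apply (compatible_equiv (lrel_rtclos compatible_union)).
  - now apply compatible_union_greatest; [apply compatible_rtclos_union|].
  - split; intros n a b Hab; now apply rt_step.
  - apply compatible_rtclos_union.
Qed.

End CompatibleUnion.
End LambdaTermRelations.

Section Relators.
Variables (Sg : signature) (Mo : monad) (A : cont_sig_alg Sg Mo) (G : rel_lifting Mo).

Lemma relator_full_preorder (X : Type) :
  is_relator Mo G -> preorder (T Mo X) (G X X (fun _ _ => True)).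
Proof.
  intros [Hrefl [Hcomp [_ [Hmono _]]]]. split.
  - intros u. apply (Hmono _ _ eq); auto.
  - intros u v w Huv Hvw. apply (Hmono _ _ (rel_comp (fun _ _ : X => True) (fun _ _ => True)));
      eauto.
Qed.

Lemma preadequate_rtclos (R : lrel Sg) :
  is_relator Mo G -> preadequate A G R -> preadequate A G (lrel_rtclos Sg R).
Proof.
  intros HG HR M N HMN. destruct (relator_full_preorder (vl Sg 0) HG) as [Hrefl Htrans].
  induction HMN as [M N HMN| |M N P _ IH1 _ IH2]; eauto.
Qed.

Lemma leqG_is_union : leqG A G = compatible_union Sg (preadequate A G).
Proof. reflexivity. Qed.

Lemma preadequate_leqG : preadequate A G (leqG A G).
Proof. intros M N [R [_ [HR HMN]]]. now apply HR. Qed.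

Lemma leqG_greatest (R : lrel Sg) :
  compatible R -> preadequate A G R -> lrel_sub R (leqG A G).
Proof. rewrite leqG_is_union. apply compatible_union_greatest. Qed.

Lemma leqG_compatible : is_relator Mo G -> compatible (leqG A G).
Proof.
  intros HG. rewrite leqG_is_union. apply compatible_union_compatible.
  apply preadequate_rtclos; [exact HG|apply preadequate_leqG].
Qed.

Lemma preadequate_conv_relator (R : lrel Sg) :
  preadequate A (conv_relator Mo G) R <-> preadequate A G (lrel_conv R).
Proof. split; intros HR M N HMN; exact (HR N M HMN). Qed.

End Relators.

Theorem mainTheorem13 (Sg : signature) (Mo : monad) (A : cont_sig_alg Sg Mo)
  (G : rel_lifting Mo)
  (HG : is_relator Mo G) (Hind : inductive_relator Sg Mo A G) (Hresp : respects_sig Sg Mo A G) :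
  compatible (geqG A G)
  /\ preadequate A (conv_relator Mo G) (geqG A G)
  /\ (forall R : lrel Sg, compatible R -> preadequate A (conv_relator Mo G) R ->
        lrel_sub R (geqG A G)).
Proof.
  split; [|split].
  - apply compatible_conv, leqG_compatible, HG.
  - apply preadequate_conv_relator, preadequate_leqG.
  - intros R HR HP. apply lrel_sub_conv_r, leqG_greatest.
    + now apply compatible_conv.
    + now apply preadequate_conv_relator.
Qed.
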